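(* Let $k\in\mathbb{N}$ and let $G$ be a graph on $n$ vertices with minimum degree $\delta=\delta(G)>\frac{(k-1)n}{k}$. Then (i) each $K_{k+1}$-component $C$ of $G$ satisfies $|C|>\delta$; (ii) for distinct $K_{k+1}$-components $C$ and $C'$ there are no edges between $\mathrm{ext}(C)$ and $\mathrm{ext}(C')$; (iii) for each $K_{k+1}$-component $C$, each copy $u_1\dots u_{k-1}$ of $K_{k-1}$ of $C$, and $U:=\{v: u_1\dots u_{k-1}v\in C\}$, we have $\delta(G[U])\geq k\delta-(k-1)n$ and $|U|\geq k\delta-(k-1)n+1$.
   Context: A $K_{k+1}$-walk in $G$ is a sequence of copies of $K_k$ in which consecutive copies lie in a common copy of $K_{k+1}$; its endpoints are then $K_{k+1}$-connected; the equivalence classes of copies of $K_k$ are the $K_{k+1}$-components. The vertices of a component $C$ are the vertices of the copies of $K_k$ in $C$, and $|C|$ is their number. A copy of $K_{k-1}$ is a copy of $K_{k-1}$ of $C$ if it extends to a copy of $K_k$ in $C$; $u_1\dots u_{k-1}v\in C$ means the copy of $K_k$ on these vertices lies in $C$. $\mathrm{ext}(C)$ (the exterior of $C$) is the set of vertices of $C$ that are vertices of no other $K_{k+1}$-component. *)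

(* A graph is a symmetric irreflexive relation e on a finType T. *)
From mathcomp Require Import all_boot all_order.
Set Implicit Arguments. Unset Strict Implicit. Unset Printing Implicit Defensive.

Section Defs.
Variables (T : finType) (e : rel T).

Definition clique (A : {set T}) : bool :=
  [forall x in A, forall y in A, (x != y) ==> e x y].

Definition kcopy (k : nat) (A : {set T}) : bool := clique A && (#|A| == k).

Definition kstep (k : nat) (A B : {set T}) : bool :=
  [&& kcopy k A, kcopy k B &
      [exists D : {set T}, kcopy k.+1 D && ((A :|: B) \subset D)]].

Definition kconn (k : nat) (A B : {set T}) : bool :=
  [&& kcopy k A, kcopy k B & connect (kstep k) A B].

(* C is a K_{k+1}-component: an equivalence class of copies of K_k *)
Definition is_component (k : nat) (C : {set {set T}}) : bool :=
  [exists A : {set T}, kcopy k A && (C == [set B | kconn k A B])].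

Definition cverts (C : {set {set T}}) : {set T} := \bigcup_(A in C) A.

Definition ext (k : nat) (C : {set {set T}}) : {set T} :=
  [set v in cverts C | [forall C' : {set {set T}},
      (is_component k C' && (C' != C)) ==> (v \notin cverts C')]].

(* minimum degree of the induced subgraph G[U] (for U empty, value #|U| = 0) *)
Definition mindeg_on (U : {set T}) : nat :=
  \big[minn/#|U|]_(v in U) #|[set u in U | e v u]|.

Definition mindeg : nat := mindeg_on [set: T].

End Defs.

(* Since every vertex misses at most n - delta vertices and k (n - delta) < n,
   any k vertices have a common neighbour.  Hence every clique extends to a
   maximal clique D with more than k vertices, and all k-subsets of D lie in
   one K_{k+1}-component.
   (i) A vertex with k neighbours in D joins that component C, so a vertex
   outside C sees at most k - 1 vertices of D, while any vertex sees fewer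
   than |D|; double counting the edges at D against delta |D| forces
   |C| > delta.
   (ii) An edge xy between two exteriors lies in a maximal clique, whose
   k-subsets through x and through y are K_{k+1}-connected.
   (iii) For w in U, every common neighbour of [w |: S] is a neighbour of w in U,
   and [w |: S] has at least n - k (n - delta) common neighbours. *)

From mathcomp Require Import all_boot all_order zify.
Set Implicit Arguments. Unset Strict Implicit. Unset Printing Implicit Defensive.
Import Order.TTheory.

Section Cliques.
Variables (T : finType) (e : rel T).
Hypotheses (e_sym : symmetric e) (e_irr : irreflexive e).

Lemma cliqueP (A : {set T}) :
  reflect {in A &, forall x y, x != y -> e x y} (clique e A).
Proof.
apply: (iffP forall_inP) => [cA x y xA yA | cA x xA].
  by move/forall_inP/(_ y yA)/implyP: (cA x xA).
by apply/forall_inP => y yA; apply/implyP; apply: cA.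
Qed.

Lemma clique_subset (A B : {set T}) : A \subset B -> clique e B -> clique e A.
Proof.
by move=> /subsetP sAB /cliqueP cB; apply/cliqueP => x y /sAB xB /sAB; apply: cB.
Qed.

Lemma clique_setU1 (A : {set T}) v :
  clique e A -> {in A, forall a, e v a} -> clique e (v |: A).
Proof.
move=> /cliqueP cA vA; apply/cliqueP => x y; rewrite !inE.
case/orP=> [/eqP->|xA]; case/orP=> [/eqP->|yA]; rewrite ?eqxx //.
- by move=> _; apply: vA.
- by move=> _; rewrite e_sym; apply: vA.
- exact: cA.
Qed.

Lemma clique_set2 (x y : T) : e x y -> clique e [set x; y].
Proof.
move=> exy; apply: (clique_setU1) => [|a /set1P-> //].
by apply/cliqueP => a b /set1P-> /set1P->; rewrite eqxx.
Qed.

Lemma adj_notin (A : {set T}) v : {in A, forall a, e v a} -> v \notin A.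
Proof. by move=> vA; apply/negP => /vA; rewrite e_irr. Qed.

Lemma card_adj_setU1 (A : {set T}) v :
  {in A, forall a, e v a} -> #|v |: A| = #|A|.+1.
Proof. by move=> vA; rewrite cardsU1 adj_notin. Qed.

Lemma exists_card_between (X Y : {set T}) m :
  X \subset Y -> #|X| <= m <= #|Y| ->
  exists D : {set T}, [/\ X \subset D, D \subset Y & #|D| = m].
Proof.
move: {2}(m - #|X|) (erefl (m - #|X|)) => d.
elim: d X => [|d IH] X dX sXY /andP[leXm lemY].
  by exists X; split; rewrite ?subxx //; lia.
have [y /setDP[yY yX]] : exists y, y \in Y :\: X.
  by apply/set0Pn; rewrite -card_gt0 cardsD (setIidPr sXY); lia.
have [|||D [sXD sDY cD]] := IH (y |: X); rewrite ?cardsU1 ?yX //.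
- lia.
- by rewrite subUset sub1set yY.
- by rewrite lemY andbT; lia.
by exists D; rewrite (subset_trans (subsetUr _ _) sXD).
Qed.

Lemma kcopy_subset k (D A : {set T}) :
  clique e D -> A \subset D -> #|A| = k -> kcopy e k A.
Proof. by move=> cD sAD cA; rewrite /kcopy cA eqxx andbT (clique_subset sAD). Qed.

Lemma kstep_in_clique k (D A B : {set T}) :
  clique e D -> #|D| = k.+1 -> A \subset D -> B \subset D ->
  #|A| = k -> #|B| = k -> kstep e k A B.
Proof.
move=> cD cardD sAD sBD cA cB; rewrite /kstep !(kcopy_subset cD) //=.
by apply/existsP; exists D; rewrite /kcopy cD cardD eqxx subUset sAD sBD.
Qed.

Lemma kstep_exchange k (D A : {set T}) a b :
  clique e D -> A \subset D -> b \in D -> b \notin A -> a \in A -> #|A| = k ->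
  kstep e k A (b |: (A :\ a)).
Proof.
move=> cD sAD bD bA aA cA.
have cAa : #|A :\ a|.+1 = k by rewrite -cA (cardsD1 a A) aA.
have sbAD : b |: A \subset D by rewrite subUset sub1set bD.
apply: (kstep_in_clique (clique_subset sbAD cD)); rewrite ?subsetUr //.
- by rewrite cardsU1 bA cA.
- by rewrite setUS // subsetDl.
- by rewrite cardsU1 !inE (negbTE bA) andbF.
Qed.

Lemma connect_in_clique k (D A B : {set T}) :
  clique e D -> k < #|D| -> A \subset D -> B \subset D ->
  #|A| = k -> #|B| = k -> connect (kstep e k) A B.
Proof.
move=> cD ltkD + sBD + cB; move: {2}#|A :\: B| (erefl #|A :\: B|) => d.
elim: d A => [|d IH] A dAB sAD cA.
  have sAB : A \subset B by rewrite -setD_eq0 -cards_eq0 dAB.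
  suff -> : A = B by apply: connect0.
  by apply/eqP; rewrite eqEcard sAB cA cB leqnn.
have [a /setDP[aA aB]] : exists a, a \in A :\: B.
  by apply/set0Pn; rewrite -card_gt0 dAB.
have [b /setDP[bB bA]] : exists b, b \in B :\: A.
  apply/set0Pn; rewrite setD_eq0; apply: contraNN aB => sBA.
  suff -> : B = A by [].
  by apply/eqP; rewrite eqEcard sBA cA cB leqnn.
have bD : b \in D by apply: (subsetP sBD).
apply: connect_trans (connect1 (kstep_exchange cD sAD bD bA aA cA)) _.
apply: IH.
- have -> : (b |: (A :\ a)) :\: B = (A :\: B) :\ a.
    apply/setP => x; rewrite !inE; case: (x =P b) => [->|_] /=.
      by rewrite bB !andbF.
    by rewrite andbCA.
  by apply/eq_add_S; rewrite -dAB (cardsD1 a (A :\: B)) !inE aA aB.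
- by rewrite subUset sub1set bD (subset_trans (subsetDl A _) sAD).
- by rewrite cardsU1 !inE (negbTE bA) andbF -cA (cardsD1 a A) aA.
Qed.

End Cliques.

Section Components.
Variables (T : finType) (e : rel T) (k : nat).

Lemma kstep_sym : symmetric (kstep e k).
Proof. by move=> A B; rewrite /kstep setUC andbCA. Qed.

Lemma kconn_sym : symmetric (kconn e k).
Proof. by move=> A B; rewrite /kconn andbCA (sym_connect_sym kstep_sym). Qed.

Lemma kconn_trans : transitive (kconn e k).
Proof.
move=> B A D /and3P[kA _ cAB] /and3P[_ kD cBD].
by rewrite /kconn kA kD (connect_trans cAB cBD).
Qed.

Lemma kconn_refl A : kcopy e k A -> kconn e k A A.
Proof. by move=> kA; rewrite /kconn kA connect0. Qed.

Lemma kstep_kconn A B : kstep e k A B -> kconn e k A B.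
Proof. by move=> st; case/and3P: (st) => kA kB _; rewrite /kconn kA kB connect1. Qed.

Lemma kconn_component A B :
  kconn e k A B -> [set X | kconn e k A X] = [set X | kconn e k B X].
Proof.
move=> cAB; apply/setP => X; rewrite !inE; apply/idP/idP; last exact: kconn_trans.
by apply: kconn_trans; rewrite kconn_sym.
Qed.

Lemma componentE C A :
  is_component e k C -> A \in C -> C = [set B | kconn e k A B].
Proof. by case/existsP=> A0 /andP[_ /eqP->]; rewrite inE; apply: kconn_component. Qed.

Lemma component_kcopy C A : is_component e k C -> A \in C -> kcopy e k A.
Proof.
by move=> hC AinC; move: (AinC); rewrite {1}(componentE hC AinC) inE => /and3P[].
Qed.

Lemma component_kconn_closed C A B :
  is_component e k C -> A \in C -> kconn e k A B -> B \in C.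
Proof. by move=> hC AinC; rewrite (componentE hC AinC) inE. Qed.

Lemma ext_component C A x :
  x \in ext e k C -> kcopy e k A -> x \in A -> C = [set B | kconn e k A B].
Proof.
rewrite inE => /andP[_ /forallP/(_ [set B | kconn e k A B])] + kA xA.
apply: contraTeq => neC; rewrite eq_sym neC andbT negb_imply negbK.
apply/andP; split; first by apply/existsP; exists A; rewrite kA eqxx.
by apply/bigcupP; exists A; rewrite // inE kconn_refl.
Qed.

End Components.

Section Degrees.
Variables (T : finType) (e : rel T).

Definition nbhd v : {set T} := [set u | e v u].
Definition cnbhd (X : {set T}) : {set T} := \bigcap_(x in X) nbhd x.

Lemma mindeg_le_nbhd v : mindeg e <= #|nbhd v|.
Proof.
rewrite /mindeg /mindeg_on -minEnat.
have -> : nbhd v = [set u in [set: T] | e v u] by apply/setP => u; rewrite !inE.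
exact: (bigmin_le_cond _ (fun u => #|[set w in [set: T] | e u w]|) (in_setT v)).
Qed.

Lemma mindeg_le_card : mindeg e <= #|T|.
Proof.
by rewrite /mindeg /mindeg_on -minEnat -cardsT; exact: (bigmin_le_id _ #|[set: T]|).
Qed.

Lemma le_mindeg_on (U : {set T}) b :
  b <= #|U| -> {in U, forall v, b <= #|U :&: nbhd v|} -> b <= mindeg_on e U.
Proof.
move=> bU bN; apply: (big_ind (leq b)) => // [x y le_bx le_by | v vU].
  by rewrite leq_min le_bx.
apply: leq_trans (bN v vU) (subset_leq_card _).
by apply/subsetP => u; rewrite !inE.
Qed.

Lemma card_cnbhdC X : #|~: cnbhd X| <= #|X| * (#|T| - mindeg e).
Proof.
rewrite /cnbhd setC_bigcap -sum_nat_const.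
elim/big_rec2: _ => [|x S n _ IH]; first by rewrite cards0.
apply: leq_trans (leq_card_setU _ _) (leq_add _ IH).
by have := cardsC (nbhd x); have := mindeg_le_nbhd x; lia.
Qed.

Lemma card_nbhd_lt (U : {set T}) w :
  irreflexive e -> w \in U -> #|U :&: nbhd w| < #|U|.
Proof.
move=> e_irr wU; rewrite (cardsD1 w U) wU ltnS subset_leq_card //.
apply/subsetP => u; rewrite !inE => /andP[uU ewu]; rewrite uU andbT.
by apply: contraTneq ewu => ->; rewrite e_irr.
Qed.

Lemma sum_card_nbhd (D : {set T}) : symmetric e ->
  \sum_(p in D) #|nbhd p| = \sum_v #|D :&: nbhd v|.
Proof.
move=> e_sym; under eq_bigr => p _ do rewrite -sum1_card.
rewrite (exchange_big_dep predT) //=; apply: eq_bigr => v _.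
by rewrite sum1dep_card; apply: eq_card => p; rewrite !inE e_sym.
Qed.

End Degrees.

Section MinDegree.
Variables (T : finType) (e : rel T) (k : nat).
Hypotheses (e_sym : symmetric e) (e_irr : irreflexive e) (k_pos : 0 < k).

Lemma maxclique_cnbhd0 D : maxset (clique e) D -> cnbhd e D = set0.
Proof.
case/maxsetP=> cD maxD; apply/setP => v; rewrite inE; apply/negP => /bigcapP vN.
have vD : {in D, forall a, e v a} by move=> a /vN; rewrite inE e_sym.
have /setP/(_ v) := maxD _ (clique_setU1 e_sym cD vD) (subsetUr _ _).
by rewrite setU11 (negbTE (adj_notin e_irr vD)).
Qed.

Lemma maxclique_nbhd_lt D v :
  maxset (clique e) D -> #|D :&: nbhd e v| < #|D|.
Proof.
move=> maxD; rewrite ltn_neqAle subset_leq_card ?subsetIl // andbT.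
apply/negP => /eqP eq_card.
have /setIidPl sDN : D :&: nbhd e v = D.
  by apply/eqP; rewrite eqEcard subsetIl eq_card leqnn.
have : v \in cnbhd e D by apply/bigcapP => x /(subsetP sDN); rewrite !inE e_sym.
by rewrite maxclique_cnbhd0 ?inE.
Qed.

Lemma mem_cverts_of_nbhd C A D v :
  is_component e k C -> A \in C -> clique e D -> A \subset D -> k < #|D| ->
  k <= #|D :&: nbhd e v| -> v \in cverts C.
Proof.
move=> hC AinC cD sAD ltkD leK.
have kA := component_kcopy hC AinC; have /andP[_ /eqP cardA] := kA.
case: (@exists_card_between _ set0 (D :&: nbhd e v) k); rewrite ?sub0set ?cards0 //.
move=> K [_ sKN cardK].
have sKD : K \subset D := subset_trans sKN (subsetIl _ _).
have vK : {in K, forall a, e v a} by move=> a /(subsetP sKN); rewrite !inE => /andP[].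
have KinC : K \in C.
  apply: (component_kconn_closed hC AinC).
  by rewrite /kconn kA (kcopy_subset cD sKD cardK) (connect_in_clique cD ltkD).
have cvK := clique_setU1 e_sym (clique_subset sKD cD) vK.
have cardvK : #|v |: K| = k.+1 by rewrite (card_adj_setU1 e_irr vK) cardK.
case: (@exists_card_between _ [set v] (v |: K) k).
- by rewrite sub1set setU11.
- by rewrite cards1 k_pos cardvK leqnSn.
move=> K' [vK' sK' cardK'].
have st : kstep e k K K' := kstep_in_clique cvK cardvK (subsetUr _ _) sK' cardK cardK'.
apply/bigcupP; exists K'; last by rewrite -sub1set.
exact: component_kconn_closed hC KinC (kstep_kconn st).
Qed.

Definition link (C : {set {set T}}) (S : {set T}) : {set T} :=
  [set v | v |: S \in C].

Lemma cnbhd_link C S w :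
  is_component e k C -> kcopy e (k - 1) S -> w \in link C S ->
  cnbhd e (w |: S) \subset link C S :&: nbhd e w.
Proof.
move=> hC /andP[cS /eqP cardS]; rewrite inE => wSC.
apply/subsetP => y /bigcapP yN.
have ewy : e w y by have := yN w (setU11 w S); rewrite inE.
have ywS : {in w |: S, forall a, e y a} by move=> a /yN; rewrite inE e_sym.
have yS : {in S, forall a, e y a} by move=> a aS; apply: ywS; rewrite !inE aS orbT.
have /andP[cwS /eqP cardwS] := component_kcopy hC wSC.
rewrite !inE ewy andbT; apply: (component_kconn_closed hC wSC); apply: kstep_kconn.
apply: (kstep_in_clique (D := y |: (w |: S))).
- exact: (clique_setU1 e_sym cwS ywS).
- by rewrite (card_adj_setU1 e_irr ywS) cardwS.
- exact: subsetUr.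
- by rewrite setUS // subsetUr.
- exact: cardwS.
- by rewrite (card_adj_setU1 e_irr yS) cardS; lia.
Qed.

Lemma link_nbhd_card C S w :
  is_component e k C -> kcopy e (k - 1) S -> w \in link C S ->
  k * mindeg e <= #|link C S :&: nbhd e w| + (k - 1) * #|T|.
Proof.
move=> hC kS wU; have wSC : w |: S \in C by rewrite inE in wU.
have /andP[_ /eqP cardwS] := component_kcopy hC wSC.
have := subset_leq_card (cnbhd_link hC kS wU).
have := cardsC (cnbhd e (w |: S)); have := card_cnbhdC e (w |: S); rewrite cardwS.
have : k * mindeg e <= k * #|T| by rewrite leq_mul2l mindeg_le_card orbT.
rewrite mulnBr mulnBl mul1n; lia.
Qed.

Hypothesis hdelta : (k - 1) * #|T| < k * mindeg e.

Lemma cnbhd_neq0 (X : {set T}) : #|X| <= k -> cnbhd e X != set0.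
Proof.
move=> Xk; rewrite -card_gt0.
have := cardsC (cnbhd e X); have := card_cnbhdC e X.
have : #|X| * (#|T| - mindeg e) <= k * (#|T| - mindeg e) by rewrite leq_mul2r Xk orbT.
have : k * mindeg e <= k * #|T| by rewrite leq_mul2l mindeg_le_card orbT.
move: hdelta; rewrite !mulnBr mulnBl mul1n; lia.
Qed.

Lemma k_lt_maxclique D : maxset (clique e) D -> k < #|D|.
Proof.
by move=> maxD; rewrite ltnNge; apply/negP => /cnbhd_neq0; rewrite maxclique_cnbhd0 ?eqxx.
Qed.

Lemma ext_nonadjacent C C' x y :
  C != C' -> x \in ext e k C -> y \in ext e k C' -> ~~ e x y.
Proof.
move=> neC xC yC'; apply: contra neC => exy.
have [D maxD sxyD] := maxset_exists (P := clique e) (clique_set2 e_sym exy).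
have cD := maxsetp maxD; have ltkD := k_lt_maxclique maxD.
have kcopy_at z : z \in D -> exists A : {set T}, [/\ z \in A, A \subset D & #|A| = k].
  move=> zD; case: (@exists_card_between _ [set z] D k).
  - by rewrite sub1set.
  - by rewrite cards1 k_pos ltnW.
  by move=> A [zA sAD cA]; exists A; rewrite -sub1set.
have [Ax [xAx sAxD cardAx]] := kcopy_at x (subsetP sxyD x (setU11 _ _)).
have [Ay [yAy sAyD cardAy]] := kcopy_at y (subsetP sxyD y (setU1r _ (set11 y))).
have kAx := kcopy_subset cD sAxD cardAx; have kAy := kcopy_subset cD sAyD cardAy.
have cAxy : kconn e k Ax Ay by rewrite /kconn kAx kAy (connect_in_clique cD ltkD).
by rewrite (ext_component xC kAx xAx) (ext_component yC' kAy yAy) (kconn_component cAxy).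
Qed.

Lemma mindeg_lt_cverts C : is_component e k C -> mindeg e < #|cverts C|.
Proof.
move=> hC; have [A /andP[kA /eqP defC]] := existsP hC.
have AinC : A \in C by rewrite defC inE kconn_refl.
have [D maxD sAD] := maxset_exists (P := clique e) (proj1 (andP kA)).
have cD := maxsetp maxD; have ltkD := k_lt_maxclique maxD.
set W := cverts C.
have degD v : #|D :&: nbhd e v| <= (k - 1) + (if v \in W then #|D| - k else 0).
  case: ifPn => [_|vW]; first by have := maxclique_nbhd_lt v maxD; lia.
  rewrite addn0 leqNgt; apply: contra vW => ltkN.
  by apply: mem_cverts_of_nbhd hC AinC cD sAD ltkD _; lia.
have lowD : #|D| * mindeg e <= \sum_v #|D :&: nbhd e v|.
  rewrite -sum_card_nbhd // -sum_nat_const; apply: leq_sum => p _.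
  exact: mindeg_le_nbhd.
have upD : \sum_v #|D :&: nbhd e v| <= #|T| * (k - 1) + #|W| * (#|D| - k).
  have -> : #|T| * (k - 1) + #|W| * (#|D| - k) =
            \sum_v ((k - 1) + (if v \in W then #|D| - k else 0)).
    by rewrite big_split /= sum_nat_const -big_mkcond /= sum_nat_const.
  by apply: leq_sum => v _; apply: degD.
rewrite ltnNge; apply/negP => leW.
have : #|W| * (#|D| - k) <= mindeg e * (#|D| - k) by rewrite leq_mul2r leW orbT.
have : #|D| * mindeg e = k * mindeg e + (#|D| - k) * mindeg e.
  by rewrite -mulnDl subnKC // ltnW.
move: hdelta lowD upD; rewrite (mulnC (k - 1)); lia.
Qed.

End MinDegree.

Theorem lemma6p1 (T : finType) (e : rel T) (k : nat)
  (e_sym : symmetric e) (e_irr : irreflexive e)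
  (k_pos : 0 < k)
  (hdelta : (k - 1) * #|T| < k * mindeg e) :
  (* (i) *)
  (forall C : {set {set T}}, is_component e k C ->
     mindeg e < #|cverts C|) /\
  (* (ii) *)
  (forall C C' : {set {set T}}, is_component e k C -> is_component e k C' ->
     C != C' ->
     forall x y, x \in ext e k C -> y \in ext e k C' -> ~~ e x y) /\
  (* (iii) *)
  (forall (C : {set {set T}}) (S : {set T}),
     is_component e k C -> kcopy e (k - 1) S ->
     (exists v, v |: S \in C) ->
     let U := [set v | v |: S \in C] in
     k * mindeg e <= mindeg_on e U + (k - 1) * #|T| /\
     k * mindeg e + 1 <= #|U| + (k - 1) * #|T|).
Proof.
split; first exact: mindeg_lt_cverts.
split; first by move=> C C' _ _ neC x y; apply: ext_nonadjacent neC.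
move=> C S hC kS [v0 v0SC] U.
have degU w : w \in U -> k * mindeg e <= #|U :&: nbhd e w| + (k - 1) * #|T|.
  exact: link_nbhd_card.
have v0U : v0 \in U by rewrite inE.
have := degU v0 v0U; have := card_nbhd_lt e_irr v0U => ltU degv0.
split; last by lia.
suff : k * mindeg e - (k - 1) * #|T| <= mindeg_on e U by lia.
by apply: le_mindeg_on => [|w /degU]; lia.
Qed.
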